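(* Let $p\ge1$ and let $\mathbf X$ be a random variable with values in $\mathcal G^w_p(V)$ such that $\mathbb E|\langle\mathbf X_{0,T},e_\sigma\rangle|<\infty$ for all $\sigma\in[d]^*$. Then for every $k\ge1$ and nonempty words $\tau_1,\dots,\tau_k\in[d]^*$, with $\boldsymbol\tau=(\tau_1,\dots,\tau_k)$, $$\langle\kappa_{\mathbf X},e_{\tau_1}\sqcup\cdots\sqcup e_{\tau_k}\rangle=\sum_{\mathbf a\in\mathrm{Orp}(\boldsymbol\tau)}(-1)^{|\mathbf a|-1}\frac{\mathbf a!}{|\mathbf a|}\,\mu_{\mathbf X}(\mathbf a).$$
   Context: Let $V=\mathbb R^d$ with basis $e_1,\dots,e_d$; $[n]=\{1,\dots,n\}$; $[d]^*=\bigcup_{m\ge0}[d]^m$ is the set of words, $|\tau|$ the length, $e_\tau=e_{i_1}\otimes\cdots\otimes e_{i_m}$ for $\tau=(i_1,\dots,i_m)$, $e_{()}=1$. $T(V)=\bigoplus_{m\ge0}V^{\otimes m}$, $T((V))=\prod_{m\ge0}V^{\otimes m}$ (an algebra under $\otimes$), pairing $\langle s,t\rangle=\sum_\tau s_\tau t_\tau$. For $y\in T((V))$ with $\langle y,1\rangle=1$, $\log y=\sum_{n\ge1}\frac{(-1)^{n-1}}{n}(y-1)^{\otimes n}$. The shuffle product $\sqcup$ on $T(V)$ is the bilinear extension of $e_{\tau_1}\sqcup e_{\tau_2}=\sum_\sigma e_\sigma$ over all interleavings $\sigma$ of $\tau_1,\tau_2$ counted with multiplicity; it is associative and commutative. Weakly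 geometric $p$-rough paths ($p\ge1$, $T>0$): maps $\mathbf x:\{(s,t):0\le s\le t\le T\}\to T((V))$ with, for $0\le s\le t\le u\le T$, (i) $\langle\mathbf x_{s,t},1\rangle=1$, $\langle\mathbf x_{s,t},f\sqcup g\rangle=\langle\mathbf x_{s,t},f\rangle\langle\mathbf x_{s,t},g\rangle$ for $f,g\in T(V)$; (ii) $\mathbf x_{s,t}\otimes\mathbf x_{t,u}=\mathbf x_{s,u}$; (iii) finite $p$-variation $\max_{1\le m\le p}\sup_D(\sum_i|\pi_m\mathbf x_{t_i,t_{i+1}}|^{p/m})^{1/p}<\infty$. $\mathcal G^w_p(V)$ is the set of these. For a random $\mathbf X$ with integrable signature coordinates: $\mu_{\mathbf X}=\mathbb E[\mathbf X_{0,T}]$, $\kappa_{\mathbf X}=\log\mu_{\mathbf X}$. Partitions and ordered partitions: for a finite poset $P$, $\mathcal P(P)$ is the set of partitions into nonempty blocks, ordered by refinement; $|\mathbf a|$ is the number of blocks. $f:P\to\mathbb N$ is order-preserving if $x\le y\Rightarrow f(x)\le f(y)$; $\ker f$ is the set of nonempty fibres; $\mathrm{Orp}(P)=\{\ker f: f \text{ order-preserving}\}$; for $\mathbf a\in\mathrm{Orp}(P)$, $\mathbf a!=\#\{f:P\to[|\mathbf a|]\text{ order-preserving}:\ker f=\mathbf a\}$. Word poset: $P_{\boldsymbol\tau}=\{(j,p):j\in[k],p\in[|\tau_j|]\}$ (positions treated as distinct even if letters repeat), with $(j,p)\le(j',p')$ iff $j=j'$ and $p\le p'$; $\mathcal P(\boldsymbol\tau)=\mathcal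 P(P_{\boldsymbol\tau})$, $\mathrm{Orp}(\boldsymbol\tau)=\mathrm{Orp}(P_{\boldsymbol\tau})$. For a block $B$ and $j$, $B^j=B\cap(\{j\}\times[|\tau_j|])$; if nonempty with positions $p_1<\dots<p_r$, $e_{B^j}=e_{\tau_j(p_1)}\otimes\cdots\otimes e_{\tau_j(p_r)}$ ($\tau_j(p)$ the $p$-th letter). Generalised moment: $\mu_{\mathbf X}(\mathbf a)=\prod_{B\in\mathbf a}\mathbb E\big[\prod_{j:B^j\ne\emptyset}\langle\mathbf X_{0,T},e_{B^j}\rangle\big]$. *)

From HB Require Import structures.
From mathcomp Require Import all_boot all_order all_algebra.
From mathcomp Require Import all_classical all_reals all_analysis.
Set Implicit Arguments. Unset Strict Implicit. Unset Printing Implicit Defensive.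
Import Order.TTheory GRing.Theory Num.Theory.
Import numFieldNormedType.Exports.
Local Open Scope ring_scope.

Section Tensor.
Variables (R : realType) (d : nat).

(* words over the alphabet [d] = {0,..,d-1} (0-based letters) *)
Definition word := seq 'I_d.

(* T((V)) : formal tensor tseries, given by their coefficients <x, e_w> *)
Definition tseries := word -> R.

Definition tone : tseries := fun w => if w is [::] then 1 else 0.

Definition tmul (x y : tseries) : tseries :=
  fun w => \sum_(i < (size w).+1) x (take i w) * y (drop i w).

Fixpoint tpow (x : tseries) (n : nat) : tseries :=
  if n is n'.+1 then tmul x (tpow x n') else tone.

(* log y = sum_{n>=1} (-1)^(n-1)/n (y-1)^{(x) n}; the coefficient at a word w
   only receives contributions from n <= |w| when <y,1> = 1. *)
Definition tlog (y : tseries) : tseries :=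
  fun w => \sum_(1 <= n < (size w).+1)
             ((-1) ^+ n.-1 / n%:R) * tpow (fun v => y v - tone v) n w.

(* T(V): finite linear combinations sum_i c_i e_{w_i} *)
Definition tpoly := seq (R * word).

Definition pairing (x : tseries) (f : tpoly) : R := \sum_(c <- f) c.1 * x c.2.

(* shuffles of two words: all interleavings, with multiplicity *)
Fixpoint shw (u v : word) {struct u} : seq word :=
  match u with
  | [::] => [:: v]
  | a :: u' =>
      let fix aux (v : word) : seq word :=
        match v with
        | [::] => [:: u]
        | b :: v' => map (cons a) (shw u' v) ++ map (cons b) (aux v')
        end in aux v
  end.

Definition shp (f g : tpoly) : tpoly :=
  flatten [seq [seq (a.1 * b.1, w) | w <- shw a.2 b.2] | a <- f, b <- g].

Definition ebasis (w : word) : tpoly := [:: (1, w)].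

Definition lvlnorm (m : nat) (y : tseries) : R :=
  Num.sqrt (\sum_(t : m.-tuple 'I_d) (y (val t)) ^+ 2).

(* weakly geometric p-rough path on [0,T]; x s t is only constrained
   for 0 <= s <= t <= T *)
Definition wgrp (p T : R) (x : R -> R -> tseries) : Prop :=
  [/\ (forall s t, 0 <= s -> s <= t -> t <= T ->
         x s t [::] = 1 /\
         forall f g : tpoly,
           pairing (x s t) (shp f g) = pairing (x s t) f * pairing (x s t) g),
      (forall s t u, 0 <= s -> s <= t -> t <= u -> u <= T ->
         tmul (x s t) (x t u) = x s u) &
      (* finite p-variation: for 1 <= m <= p the sums over partitions
         0 = t_0 < t_1 < ... < t_n = T are uniformly bounded *)
      exists C : R, forall m : nat, (1 <= m)%N -> m%:R <= p ->
        forall ts : seq R, path <%R 0 ts -> last 0 ts = T ->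
          \sum_(i <- zip (0 :: ts) ts)
             powR (lvlnorm m (x i.1 i.2)) (p / m%:R) <= C].

End Tensor.

Section Partitions.
Variables (P : finType) (le : rel P).

Definition order_pres (f : P -> nat) : bool :=
  [forall x, forall y, le x y ==> (f x <= f y)%N].

Definition kerf (f : P -> nat) : {set {set P}} :=
  [set [set y | f y == f x] | x : P].

Definition isOrp (a : {set {set P}}) : Prop :=
  exists f : P -> nat, order_pres f /\ kerf f = a.

(* a! = #{ f : P -> [|a|] order preserving : ker f = a },
   [|a|] = {1,..,|a|} realised inside 'I_(|a|+1) *)
Definition afact (a : {set {set P}}) : nat :=
  #|[set g : {ffun P -> 'I_(#|a|.+1)} |
      [forall x, (0 < g x)%N] &&
      order_pres (fun x => nat_of_ord (g x)) &&
      (kerf (fun x => nat_of_ord (g x)) == a)]|.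
End Partitions.

Section WordPoset.
Variables (d k : nat) (tau : 'I_k -> seq 'I_d).

(* P_tau = {(j,p) : j in [k], p in [|tau_j|]} (0-based indices) *)
Definition Ptau := {j : 'I_k & 'I_(size (tau j))}.

Definition le_tau : rel Ptau :=
  fun x y => (tag x == tag y) && (nat_of_ord (tagged x) <= nat_of_ord (tagged y))%N.

Definition inB (B : {set Ptau}) (j : 'I_k) (q : 'I_(size (tau j))) : bool :=
  Tagged (fun j => 'I_(size (tau j))) q \in B.

Definition blockword (B : {set Ptau}) (j : 'I_k) : seq 'I_d :=
  [seq tnth (in_tuple (tau j)) q | q <- enum 'I_(size (tau j)) & inB B q].
End WordPoset.

Section Moments.
Local Open Scope classical_set_scope.
Variables (dO : measure_display) (Omega : measurableType dO) (R : realType)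
  (Pr : probability Omega R) (d : nat) (T : R) (X : Omega -> R -> R -> tseries R d).

Definition muX : tseries R d := fun w => Rintegral Pr setT (fun om => X om 0 T w).

Definition kappaX : tseries R d := tlog muX.

Definition gen_moment (k : nat) (tau : 'I_k -> seq 'I_d) (a : {set {set Ptau tau}}) : R :=
  \prod_(B in a) Rintegral Pr setT
     (fun om => \prod_(j : 'I_k | [exists q : 'I_(size (tau j)), inB B q])
                  X om 0 T (blockword B j)).
End Moments.

(* Pairing log mu with the shuffle of e_{tau_1}, ..., e_{tau_k} sums, over all
   interleavings x of the words, the coefficients (-1)^(n-1)/n <(mu - 1)^{(x)n}, x>.
   Deconcatenation is a morphism for the shuffle product, so cutting an interleaving
   into n consecutive pieces is the same as cutting every tau_j into n consecutive
   pieces, i.e. labelling the positions of P_tau order-preservingly by 1, ..., n;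
   subtracting 1 from mu kills exactly the labellings with an empty label class.
   Since every signature is a shuffle character, the shuffle of the subwords e_{B^j}
   of a class B pairs with mu = E[X_{0,T}] to E[prod_j <X_{0,T}, e_{B^j}>].  Grouping
   the surjective labellings by their kernel a yields a! copies of mu_X(a). *)

From HB Require Import structures.
From mathcomp Require Import all_boot all_order all_algebra.
From mathcomp Require Import all_classical all_reals all_analysis.
From mathcomp Require Import ring.
Import Order.TTheory GRing.Theory Num.Theory.
Import numFieldNormedType.Exports.
Local Open Scope ring_scope.
Set Implicit Arguments. Unset Strict Implicit. Unset Printing Implicit Defensive.

Section Shuffle.
Variables (d : nat) (V : nmodType).
Local Notation W := (word d).
Arguments shw {d} u v : simpl never.

Lemma shw_nil_l (v : W) : shw [::] v = [:: v]. Proof. by []. Qed.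
Lemma shw_nil_r (u : W) : shw u [::] = [:: u]. Proof. by case: u. Qed.
Lemma shw_cons (a : 'I_d) u b v : shw (a :: u) (b :: v) =
  map (cons a) (shw u (b :: v)) ++ map (cons b) (shw (a :: u) v).
Proof. by []. Qed.

Lemma size_shw (u v x : W) : x \in shw u v -> size x = (size u + size v)%N.
Proof.
elim: u v x => [|a u IHu] v x; first by rewrite shw_nil_l inE => /eqP ->.
elim: v x => [|b v IHv] x; first by rewrite shw_nil_r inE => /eqP ->; rewrite addn0.
by rewrite shw_cons mem_cat => /orP[] /mapP [y Hy ->] /=;
  rewrite ?(IHu _ _ Hy) ?(IHv _ Hy) ?addnS.
Qed.

Definition deconcat_sum (F : W -> W -> V) (x : W) : V :=
  \sum_(i < (size x).+1) F (take i x) (drop i x).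

Lemma deconcat_sum_cons F a (x : W) :
  deconcat_sum F (a :: x) = F [::] (a :: x) + deconcat_sum (fun p => F (a :: p)) x.
Proof. by rewrite /deconcat_sum big_ord_recl. Qed.

Definition shuffle_deconcat (F : W -> W -> V) (u v : W) : V :=
  \sum_(i < (size u).+1) \sum_(j < (size v).+1)
     \sum_(x1 <- shw (take i u) (take j v))
        \sum_(x2 <- shw (drop i u) (drop j v)) F x1 x2.

Lemma shuffle_deconcat_nil_l F (v : W) : shuffle_deconcat F [::] v = deconcat_sum F v.
Proof. by rewrite /shuffle_deconcat big_ord1; apply: eq_bigr => j _; rewrite !big_seq1. Qed.

Lemma shuffle_deconcat_nil_r F (u : W) : shuffle_deconcat F u [::] = deconcat_sum F u.
Proof.
rewrite /shuffle_deconcat; apply: eq_bigr => i _.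
by rewrite big_ord1 !shw_nil_r !big_seq1.
Qed.

Lemma shuffle_deconcat_cons F a (u : W) b v :
  shuffle_deconcat F (a :: u) (b :: v) =
  \sum_(x <- shw (a :: u) (b :: v)) F [::] x +
  shuffle_deconcat (fun p => F (a :: p)) u (b :: v) +
  shuffle_deconcat (fun p => F (b :: p)) (a :: u) v.
Proof.
rewrite /shuffle_deconcat big_ord_recl [X in _ = _ + _ + X]big_ord_recl /=.
rewrite addrACA; congr (_ + _).
  rewrite big_ord_recl /= !big_seq1; congr (_ + _).
  by apply: eq_bigr => j _; rewrite !big_seq1.
rewrite -big_split; apply: eq_bigr => i _ /=.
rewrite big_ord_recl [X in _ = X + _]big_ord_recl /= !shw_nil_r !big_seq1 -addrA.
congr (_ + _); rewrite -big_split; apply: eq_bigr => j _.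
by rewrite /= shw_cons big_cat !big_map.
Qed.

Lemma sum_shw_deconcat F (u v : W) :
  \sum_(x <- shw u v) deconcat_sum F x = shuffle_deconcat F u v.
Proof.
elim: u v F => [|a u IHu] v F; first by rewrite big_seq1 shuffle_deconcat_nil_l.
elim: v F => [|b v IHv] F; first by rewrite shw_nil_r big_seq1 shuffle_deconcat_nil_r.
have split_head c (s : seq W) : \sum_(x <- s) deconcat_sum F (c :: x) =
    \sum_(x <- s) F [::] (c :: x) + \sum_(x <- s) deconcat_sum (fun p => F (c :: p)) x.
  by rewrite -big_split; apply: eq_bigr => x _; rewrite deconcat_sum_cons.
rewrite shuffle_deconcat_cons -IHu -IHv !shw_cons !big_cat /= !big_map !split_head.
by rewrite addrACA addrA.
Qed.
End Shuffle.

Section IteratedShuffle.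
Variables (d : nat) (V : nmodType).
Local Notation W := (word d).

Definition shuffles (ws : seq W) : seq W :=
  foldr (fun w L => flatten [seq shw w v | v <- L]) [:: [::]] ws.

Lemma sum_shuffles_cons w ws (G : W -> V) :
  \sum_(x <- shuffles (w :: ws)) G x = \sum_(v <- shuffles ws) \sum_(x <- shw w v) G x.
Proof. by rewrite /= big_flatten big_map. Qed.

Lemma size_shuffles (ws : seq W) x : x \in shuffles ws -> size x = sumn (map size ws).
Proof.
elim: ws x => [|w ws IH] x /=; first by rewrite inE => /eqP ->.
by case/flatten_mapP => v Hv /size_shw ->; rewrite (IH _ Hv).
Qed.

Lemma shuffles_nil (ws : seq W) : all (pred1 [::]) ws -> shuffles ws = [:: [::]].
Proof. by elim: ws => [|w ws IH] //= /andP[/eqP -> /IH ->]. Qed.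
End IteratedShuffle.

Section CutSums.
Variables (V : nmodType) (I : eqType).

(* [cut_sum r bnd F] sums [F c] over all [c] with [c i <= bnd i] for [i] in [r]
   and [c i = 0] elsewhere. *)
Fixpoint cut_sum (r : seq I) (bnd : I -> nat) (F : (I -> nat) -> V) : V :=
  if r is j :: r' then
    \sum_(x < (bnd j).+1) cut_sum r' bnd (fun c => F [eta c with j |-> x : nat])
  else F (fun _ => 0%N).

Lemma eq_cut_sum r bnd (F G : (I -> nat) -> V) :
  (forall c, (forall i, (c i <= bnd i)%N) -> F c = G c) -> cut_sum r bnd F = cut_sum r bnd G.
Proof.
elim: r F G => [|j r IH] F G FG /=; first exact: FG.
apply: eq_bigr => x _; apply: IH => c Hc; apply: FG => i /=.
by case: eqP => [->|_]; [rewrite -ltnS | exact: Hc].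
Qed.

Lemma cut_sum_sum r bnd (J : finType) (P : pred J) (F : J -> (I -> nat) -> V) :
  cut_sum r bnd (fun c => \sum_(y | P y) F y c) = \sum_(y | P y) cut_sum r bnd (F y).
Proof.
elim: r F => [|j r IH] F //=.
by under eq_bigr do rewrite IH; rewrite exchange_big.
Qed.

Lemma cut_sum_delta r bnd (h : I -> nat) (v : V) :
  uniq r -> (forall i, i \in r -> (h i <= bnd i)%N) ->
  cut_sum r bnd (fun c => if all (fun i => c i == h i) r then v else 0) = v.
Proof.
elim: r v => [|j r IH] v //= /andP[jr ur] hb.
have hj : (h j < (bnd j).+1)%N by rewrite ltnS hb ?mem_head.
rewrite (bigD1 (Ordinal hj)) //= big1 ?addr0 => [|x /negbTE xj].
  rewrite -[RHS](IH v ur) => [|i ir]; last by apply: hb; rewrite inE ir orbT.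
  apply: eq_cut_sum => c _ /=; rewrite eqxx eqxx /=; congr (if _ then _ else _).
  apply: eq_in_all => i ir /=; case: (i =P j) ir => [-> ir|//].
  by rewrite ir in jr.
rewrite eqxx -(inj_eq val_inj) /= in xj *; rewrite xj.
by elim: r {IH ur hb jr} => [|j' r' IH] //=; rewrite big1.
Qed.

Lemma sum_shuffles_deconcat d (r : seq I) (w : I -> word d) (F : word d -> word d -> V) :
  uniq r ->
  \sum_(x <- shuffles (map w r)) deconcat_sum F x =
  cut_sum r (fun j => size (w j)) (fun c =>
     \sum_(x1 <- shuffles [seq take (c j) (w j) | j <- r])
       \sum_(x2 <- shuffles [seq drop (c j) (w j) | j <- r]) F x1 x2).
Proof.
elim: r F => [|j r IH] F /=; first by rewrite !big_seq1 /deconcat_sum big_ord1.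
case/andP=> jr ur; rewrite sum_shuffles_cons.
rewrite (eq_bigr _ (fun v _ => sum_shw_deconcat F (w j) v)).
rewrite exchange_big /=; apply: eq_bigr => i _.
rewrite (IH (fun p q => \sum_(x1 <- shw (take i (w j)) p)
                        \sum_(x2 <- shw (drop i (w j)) q) F x1 x2) ur).
apply: eq_cut_sum => c _ /=; rewrite eqxx.
have Er (f : nat -> word d -> word d) :
    [seq f ([eta c with j |-> i : nat] l) (w l) | l <- r] = [seq f (c l) (w l) | l <- r].
  by apply/eq_in_map => l lr /=; case: eqP lr jr => [-> ->|].
rewrite !Er big_flatten big_map; apply: eq_bigr => p _.
by rewrite exchange_big; apply: eq_bigr => x1 _; rewrite big_flatten big_map.
Qed.
End CutSums.

Section ShuffleCharacter.
Variables (R : realType) (d : nat).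

Lemma foldr_shp_ebasis (I : Type) (r : seq I) (w : I -> word d) :
  foldr (@shp R d) (ebasis R [::]) [seq ebasis R (w i) | i <- r] =
  [seq (1, v) | v <- shuffles (map w r)].
Proof.
elim: r => [|i r IH] //=; rewrite IH /shp /ebasis /= cats0 map_flatten -!map_comp.
by congr flatten; apply: eq_map => v; apply: eq_map => x /=; rewrite mul1r.
Qed.

Lemma pairing_shp_ebasis (x : tseries R d) (I : Type) (r : seq I) (w : I -> word d) :
  pairing x (foldr (@shp R d) (ebasis R [::]) [seq ebasis R (w i) | i <- r]) =
  \sum_(v <- shuffles (map w r)) x v.
Proof.
rewrite foldr_shp_ebasis /pairing big_map.
by apply: eq_bigr => v _; rewrite mul1r.
Qed.

Lemma sum_shuffles_character (x : tseries R d) (ws : seq (word d)) : x [::] = 1 ->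
  (forall f g, pairing x (shp f g) = pairing x f * pairing x g) ->
  \sum_(w <- shuffles ws) x w = \prod_(w <- ws) x w.
Proof.
move=> x_nil x_shuffle; rewrite -[ws]map_id -pairing_shp_ebasis.
elim: ws => [|w ws IH] /=; first by rewrite /pairing big_seq1 mul1r x_nil big_nil.
by rewrite x_shuffle IH /pairing big_seq1 mul1r big_cons.
Qed.

Lemma wgrp_character p T (x : R -> R -> tseries R d) : 0 <= T -> wgrp p T x ->
  x 0 T [::] = 1 /\
  forall f g, pairing (x 0 T) (shp f g) = pairing (x 0 T) f * pairing (x 0 T) g.
Proof. by move=> T0 [/(_ 0 T (lexx 0) T0 (lexx T))]. Qed.
End ShuffleCharacter.

Section ProbabilityRintegral.
Local Open Scope classical_set_scope.
Variables (dO : measure_display) (Omega : measurableType dO) (R : realType)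
  (Pr : probability Omega R).

Lemma Rintegral_sum (I : Type) (s : seq I) (f : I -> Omega -> R) :
  (forall i, Pr.-integrable setT (EFin \o f i)) ->
  Rintegral Pr setT (fun om => \sum_(i <- s) f i om) = \sum_(i <- s) Rintegral Pr setT (f i).
Proof.
move=> fint; elim: s => [|i s IH].
  under eq_Rintegral do rewrite big_nil.
  by rewrite Rintegral_cst // mul0r big_nil.
under eq_Rintegral do rewrite big_cons.
rewrite RintegralD // ?IH ?big_cons //.
have := integrable_sum measurableT s (P := xpredT) (fun j _ => fint j).
by apply: eq_integrable => // om _; rewrite /= sumEFin.
Qed.

Lemma Rintegral_one : Rintegral Pr setT (fun _ => 1) = 1.
Proof.
by rewrite Rintegral_cst // mul1r -[RHS]/(fine 1%:E); congr fine; exact: probability_setT.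
Qed.
End ProbabilityRintegral.

Lemma card_ord_lt m b : (b <= m)%N -> #|[pred q : 'I_m | (q < b)%N]| = b.
Proof.
move=> bm; rewrite cardE /enum_mem -enumT /= size_filter.
rewrite -(count_map val (fun n => (n < b)%N)) val_enum_ord -size_filter.
by rewrite -{1}(add0n b) filter_iota_ltn ?size_iota.
Qed.

Lemma downclosed_ord_card m (A : pred 'I_m) :
  (forall q q' : 'I_m, (q' <= q)%N -> A q -> A q') -> forall q : 'I_m, A q = (q < #|A|)%N.
Proof.
move=> Adown q; apply/esym; case Aq: (A q).
  have sub : [pred q' : 'I_m | (q' < q.+1)%N] \subset A.
    by apply/fintype.subsetP => q'; rewrite inE ltnS => /Adown; apply.
  by have := subset_leq_card sub; rewrite card_ord_lt.
have sub : A \subset [pred q' : 'I_m | (q' < q)%N].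
  apply/fintype.subsetP => q' Aq'; rewrite inE ltnNge; apply/negP => qq'.
  by move: (Adown _ _ qq' Aq'); rewrite Aq.
apply/negbTE; rewrite -leqNgt.
by rewrite -[X in (_ <= X)%N](card_ord_lt (ltnW (ltn_ord q))) subset_leq_card.
Qed.

Lemma filter_iota_itv n a b : (a <= b <= n)%N ->
  [seq i <- iota 0 n | (a <= i < b)%N] = iota a (b - a).
Proof.
move=> /andP[ab bn]; apply: (@irr_sorted_eq _ ltn); first exact: ltn_trans.
- exact: ltnn.
- by apply: sorted_filter; [exact: ltn_trans | exact: iota_ltn_sorted].
- exact: iota_ltn_sorted.
move=> i; rewrite mem_filter !mem_iota add0n subnKC //.
by case/boolP: (a <= i < b)%N => //= /andP[_ /leq_trans->].
Qed.

Section WordPositions.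
Variables (d k : nat) (tau : 'I_k -> seq 'I_d).
Local Notation P := (Ptau tau).

Definition pos (j : 'I_k) (q : 'I_(size (tau j))) : P :=
  Tagged (fun j => 'I_(size (tau j))) q.

Lemma order_pres_tauP (f : P -> nat) :
  reflect (forall j (q q' : 'I_(size (tau j))), (q <= q')%N -> (f (pos q) <= f (pos q'))%N)
          (order_pres (@le_tau d k tau) f).
Proof.
apply: (iffP forallP) => [fmono j q q' qq' | fmono [j q]].
  by move/forallP/(_ (pos q'))/implyP: (fmono (pos q)); apply; rewrite /le_tau /= eqxx.
apply/forallP => -[j' q']; apply/implyP; rewrite /le_tau /= => /andP[/eqP jj'].
by case: j' / jj' q' => q'; apply: fmono.
Qed.

Lemma blockword_itv (B : {set P}) j a b : (a <= b <= size (tau j))%N ->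
  (forall q : 'I_(size (tau j)), inB B q = (a <= q < b)%N) ->
  blockword B j = take (b - a) (drop a (tau j)).
Proof.
move=> abn Bitv; rewrite /blockword (eq_filter Bitv).
case: (posnP (size (tau j))) => [tj0|tj_gt0].
  have -> : enum 'I_(size (tau j)) = [::] by apply: size0nil; rewrite size_enum_ord.
  by rewrite tj0 leqn0 in abn; case/andP: abn => _ /eqP ->; rewrite sub0n take0.
pose x0 := tnth (in_tuple (tau j)) (Ordinal tj_gt0).
under eq_map => q do rewrite (tnth_nth x0) /=.
rewrite (_ : [seq nth x0 (tau j) (val q) | q <- enum 'I_(size (tau j))
                                          & (a <= nat_of_ord q < b)%N] =
   map (nth x0 (tau j)) [seq i <- map val (enum 'I_(size (tau j))) | (a <= i < b)%N]);
  last by rewrite filter_map -map_comp.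
rewrite val_enum_ord (filter_iota_itv abn) map_nth_iota //.
by case/andP: abn => _ bn; rewrite leq_sub2r.
Qed.
End WordPositions.

Section AdmissibleLabellings.
Variables (d k : nat) (tau : 'I_k -> seq 'I_d).
Local Notation P := (Ptau tau).
Local Notation le := (@le_tau d k tau).

Definition block m (g : {ffun P -> 'I_m}) (v : nat) : {set P} := [set x | (g x : nat) == v].

Definition admissible n (s : 'I_k -> nat) (g : {ffun P -> 'I_n.+1}) : bool :=
  [&& order_pres le (fun x => nat_of_ord (g x)),
      [forall x, ((g x : nat) == 0%N) == (tagged x < s (tag x))%N] &
      [forall i : 'I_n, [exists x, (g x : nat) == i.+1]]].

(* For admissible [g] the positions labelled 0 are the first [s j] ones, so this
   counts the positions of [tau j] labelled 1. *)
Definition block1_count m (s : 'I_k -> nat) (g : {ffun P -> 'I_m}) (j : 'I_k) : nat :=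
  (#|[pred q : 'I_(size (tau j)) | (g (pos q) <= 1)%N]| - s j)%N.

Section Admissible.
Variables (n : nat) (s : 'I_k -> nat) (g : {ffun P -> 'I_n.+1}).
Hypothesis gadm : admissible s g.

Lemma admissible_mono j (q q' : 'I_(size (tau j))) :
  (q <= q')%N -> (g (pos q) <= g (pos q'))%N.
Proof. by case/and3P: gadm => /order_pres_tauP gmono _ _; apply: gmono. Qed.

Lemma admissible_eq0 x : ((g x : nat) == 0%N) = (tagged x < s (tag x))%N.
Proof. by case/and3P: gadm => _ /forallP/(_ x)/eqP. Qed.

Lemma admissible_le1 x : (s (tag x) <= size (tau (tag x)))%N ->
  ((g x : nat) <= 1)%N = (tagged x < s (tag x) + block1_count s g (tag x))%N.
Proof.
case: x => j q /= sj; set A := [pred q : 'I_(size (tau j)) | (g (pos q) <= 1)%N].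
have Adown (q1 q2 : 'I_(size (tau j))) : (q2 <= q1)%N -> A q1 -> A q2.
  by rewrite !inE => /admissible_mono; apply: leq_trans.
transitivity (A q); first by [].
rewrite (downclosed_ord_card Adown) /block1_count subnKC //.
rewrite -{1}(card_ord_lt sj); apply: subset_leq_card; apply/fintype.subsetP => q'.
by rewrite !inE => q's; move: (admissible_eq0 (pos q')); rewrite q's => /eqP ->.
Qed.

Lemma admissible_block_neq0 (i : 'I_n) : exists x, (g x : nat) = i.+1.
Proof. by case/and3P: gadm => _ _ /forallP/(_ i)/existsP [x /eqP]; exists x. Qed.
End Admissible.

Definition split_block0 n (s : 'I_k -> nat) (g : {ffun P -> 'I_n.+1}) : {ffun P -> 'I_n.+2} :=
  [ffun x => inord (if (g x : nat) == 0%N then (s (tag x) <= tagged x)%N : nat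
                    else (g x).+1)].

Definition merge_block01 n (g : {ffun P -> 'I_n.+2}) : {ffun P -> 'I_n.+1} :=
  [ffun x => inord (g x).-1].

Lemma split_block0E n s (g : {ffun P -> 'I_n.+1}) x : (split_block0 s g x : nat) =
  if (g x : nat) == 0%N then (s (tag x) <= tagged x)%N : nat else (g x).+1.
Proof.
by rewrite ffunE inordK //; case: ifP => _; [exact: leq_ltn_trans (leq_b1 _) _ | rewrite ltnS].
Qed.

Lemma merge_block01E n (g : {ffun P -> 'I_n.+2}) x : (merge_block01 g x : nat) = (g x).-1.
Proof. by rewrite ffunE inordK //; case: (g x) => -[|m]. Qed.

Lemma block_split_block0 n s (g : {ffun P -> 'I_n.+1}) (i : nat) :
  block (split_block0 s g) i.+2 = block g i.+1.
Proof.
apply/setP => x; rewrite !inE split_block0E.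
by case: (nat_of_ord (g x)) => [|v] //=; case: (s (tag x) <= tagged x)%N.
Qed.

Lemma merge_block01K n s (g : {ffun P -> 'I_n.+1}) : merge_block01 (split_block0 s g) = g.
Proof.
apply/ffunP => x; apply/val_inj => /=; rewrite merge_block01E split_block0E.
by case: eqP => [->|//]; case: (s (tag x) <= tagged x)%N.
Qed.

Section SplitBlock.
Variables (n : nat) (s c : 'I_k -> nat).
Hypothesis sc_size : forall j, (s j + c j <= size (tau j))%N.
Local Notation sc := (fun j => (s j + c j)%N).

Definition admissible_count (g : {ffun P -> 'I_n.+2}) : bool :=
  admissible s g && all (fun j => c j == block1_count s g j) (enum 'I_k).

Lemma admissible_count_le1 g : admissible_count g ->
  forall x, ((g x : nat) <= 1)%N = (tagged x < sc (tag x))%N.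
Proof.
case/andP=> gadm /allP gc x.
rewrite (admissible_le1 gadm) -?(eqP (gc _ (mem_enum _ _))) //.
exact: leq_trans (leq_addr _ _) (sc_size _).
Qed.

Lemma split_merge_block01 g : admissible_count g -> split_block0 s (merge_block01 g) = g.
Proof.
move=> gc; apply/ffunP => x; apply/val_inj => /=; rewrite split_block0E merge_block01E.
by case: (nat_of_ord (g x)) (admissible_eq0 (andP gc).1 x) => [|[|v]] //= eq0;
  rewrite leqNgt -eq0.
Qed.

Lemma admissible_merge_block01 g : admissible_count g -> admissible sc (merge_block01 g).
Proof.
move=> gc; have gadm := (andP gc).1; apply/and3P; split.
- apply/order_pres_tauP => j q q' qq'; rewrite !merge_block01E -!subn1 leq_sub2r //.
  exact: admissible_mono gadm _ _ _ qq'.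
- apply/forallP => x; rewrite merge_block01E.
  by case: (nat_of_ord (g x)) (admissible_count_le1 gc x) => [|[|v]] <-.
- apply/forallP => i; have [x gx] := admissible_block_neq0 gadm (lift ord0 i).
  by apply/existsP; exists x; rewrite merge_block01E gx.
Qed.

Hypothesis c_neq0 : exists j, (0 < c j)%N.

Lemma admissible_split_block0 (g : {ffun P -> 'I_n.+1}) :
  admissible sc g -> admissible s (split_block0 s g).
Proof.
move=> gadm; apply/and3P; split.
- apply/order_pres_tauP => j q q' qq'; rewrite !split_block0E.
  have := admissible_mono gadm qq'.
  case: eqP => [->|gq0]; case: eqP => [->|_] //=.
  + by move=> _; case: (leqP (s j) q) => // sq; rewrite (leq_trans sq qq').
  + by move=> _; exact: leq_trans (leq_b1 _) _.
  + by rewrite leqn0 => /eqP.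
- apply/forallP => x; rewrite split_block0E (admissible_eq0 gadm).
  case: ifP => [_|/negbT]; first by case: (leqP (s (tag x)) (tagged x)).
  by rewrite -leqNgt ltnNge => /(leq_trans (leq_addr _ _)) ->.
- apply/forallP => i; apply/existsP; case: (unliftP ord0 i) => [i'|] ->.
    by have [x gx] := admissible_block_neq0 gadm i'; exists x; rewrite split_block0E gx.
  have [j cj] := c_neq0; have sj : (s j < size (tau j))%N.
    by apply: leq_trans (sc_size j); rewrite -addn1 leq_add2l.
  exists (pos (Ordinal sj)); rewrite split_block0E.
  by rewrite (admissible_eq0 gadm) /= -{1}(addn0 (s j)) ltn_add2l cj leqnn.
Qed.

Lemma admissible_count_split_block0 (g : {ffun P -> 'I_n.+1}) :
  admissible sc g -> admissible_count (split_block0 s g).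
Proof.
move=> gadm; rewrite /admissible_count admissible_split_block0 //=.
apply/allP => j _; rewrite /block1_count.
rewrite (eq_card (B := [pred q : 'I_(size (tau j)) | (q < sc j)%N])); last first.
  move=> q; rewrite !inE split_block0E; have /= <- := admissible_eq0 gadm (pos q).
  by case: eqP => [_|/eqP]; [rewrite leq_b1 | rewrite ltnS leqn0 => /negbTE].
by rewrite card_ord_lt // addKn.
Qed.

Lemma reindex_split_block0 (V : comPzSemiRingType) (Phi : {set P} -> V) :
  \sum_(g | admissible_count g) \prod_(i < n) Phi (block g i.+2) =
  \sum_(g : {ffun P -> 'I_n.+1} | admissible sc g) \prod_(i < n) Phi (block g i.+1).
Proof.
rewrite (reindex_onto (split_block0 s) (@merge_block01 n) split_merge_block01).
apply: eq_big => g; last by move=> _; apply: eq_bigr => i _; rewrite block_split_block0.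
apply/andP/idP => [[/admissible_merge_block01 + /eqP <-] //|gadm].
by rewrite admissible_count_split_block0 // merge_block01K.
Qed.
End SplitBlock.

Lemma card_kerf_ffun m (g : {ffun P -> 'I_m}) :
  #|kerf (fun x => nat_of_ord (g x))| = #|[set g x | x : P]|.
Proof.
have -> : kerf (fun x => nat_of_ord (g x)) = (fun v => [set y | g y == v]) @: [set g x | x : P].
  rewrite /kerf -imset_comp; apply: eq_imset => x /=.
  by apply/finset.setP => y; rewrite !inE.
apply: card_in_imset => v v' /imsetP [x _ ->] _ /finset.setP/(_ x).
by rewrite !inE eqxx => /esym /eqP.
Qed.

Lemma card_kerf_surj n (g : {ffun P -> 'I_n.+1}) : [forall x, (0 < g x)%N] ->
  (#|kerf (fun x => nat_of_ord (g x))| == n) = [forall i : 'I_n, [exists x, (g x : nat) == i.+1]].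
Proof.
move=> /forallP gpos; set C := [set~ (ord0 : 'I_n.+1)].
have imC : [set g x | x : P] \subset C.
  by apply/fintype.subsetP => _ /imsetP[x _ ->]; rewrite !inE -lt0n gpos.
have cardC : #|C| = n by rewrite cardsC1 card_ord.
have -> : (#|kerf (fun x => nat_of_ord (g x))| == n) = (C \subset [set g x | x : P]).
  rewrite card_kerf_ffun; apply/eqP/idP => [imcard|/subset_leq_card Ccard].
    have /eqP -> : [set g x | x : P] == C.
      by rewrite eqEcard; apply/andP; split; [exact: imC | rewrite imcard cardC].
    exact: subxx.
  have := subset_leq_card imC; rewrite cardC in Ccard * => imle.
  by apply: anti_leq; rewrite imle Ccard.
apply/fintype.subsetP/forallP => [Csub i|hit v].
  have /Csub/imsetP [x _ gx] : lift ord0 i \in C by rewrite !inE eq_sym neq_lift.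
  by apply/existsP; exists x; rewrite -gx.
rewrite !inE; case: (unliftP ord0 v) => [i ->|->]; last by rewrite eqxx.
move=> _; have /existsP [x /eqP gx] := hit i.
by apply/imsetP; exists x => //; apply/val_inj; rewrite /= gx.
Qed.

Lemma admissible0E n (g : {ffun P -> 'I_n.+1}) :
  admissible (fun _ => 0%N) g =
  [&& [forall x, (0 < g x)%N], order_pres le (fun x => nat_of_ord (g x)) &
      #|kerf (fun x => nat_of_ord (g x))| == n].
Proof.
have pos_eq0 : [forall x, ((g x : nat) == 0%N) == (tagged x < 0)%N] = [forall x, (0 < g x)%N].
  by apply: eq_forallb => x; rewrite ltn0 lt0n eqbF_neg.
rewrite /admissible pos_eq0; case gpos: [forall x, _]; last by rewrite andbF.
by rewrite card_kerf_surj.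
Qed.

Section Kernel.
Variables (n : nat) (g : {ffun P -> 'I_n.+1}).
Hypothesis gadm : admissible (fun _ => 0%N) g.

Lemma kerf_admissible0 : kerf (fun x => nat_of_ord (g x)) = [set block g i.+1 | i : 'I_n].
Proof.
apply/finset.setP => B; apply/imsetP/imsetP => -[z _ ->].
  have : (g z : nat) != 0%N by rewrite (admissible_eq0 gadm) ltn0.
  by case: (g z) => -[//|m] /= mn _; exists (Ordinal (mn : (m < n)%N)).
have [x gx] := admissible_block_neq0 gadm z.
by exists x => //; apply/finset.setP => y; rewrite !inE gx.
Qed.

Lemma block_admissible0_inj : injective (fun i : 'I_n => block g i.+1).
Proof.
move=> i j /finset.setP eij; have [x gx] := admissible_block_neq0 gadm i.
by move: (eij x); rewrite !inE gx eqxx => /esym/eqP [] /val_inj.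
Qed.
End Kernel.

Lemma admissible_ord1 s (g : {ffun P -> 'I_1}) :
  admissible s g = [forall x : P, (tagged x < s (tag x))%N].
Proof.
have g0 x : (g x : nat) = 0%N by case: (g x) => -[].
rewrite /admissible; have -> : [forall i : 'I_0, [exists x, (g x : nat) == i.+1]].
  by apply/forallP => -[].
rewrite andbT; have -> : order_pres le (fun x => nat_of_ord (g x)).
  by apply/order_pres_tauP => j q q' _; rewrite !g0.
by apply: eq_forallb => x; rewrite g0.
Qed.
End AdmissibleLabellings.

Section ShuffleMoments.
Variables (R : realType) (d k : nat) (tau : 'I_k -> seq 'I_d) (mu : tseries R d).
Hypothesis mu_nil : mu [::] = 1.
Local Notation P := (Ptau tau).

Definition mu_red : tseries R d := fun v => mu v - tone R v.

Definition shuffle_moment (ws : seq (word d)) : R := \sum_(x <- shuffles ws) mu x.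

Definition block_moment (B : {set P}) : R :=
  shuffle_moment [seq blockword B j | j <- enum 'I_k].

Definition block_weight n (g : {ffun P -> 'I_n.+1}) : R :=
  \prod_(i < n) block_moment (block g i.+1).

Lemma sum_shuffles_tone (ws : seq (word d)) :
  \sum_(x <- shuffles ws) tone R x = (all (pred1 [::]) ws)%:R.
Proof.
case: (boolP (all _ _)) => [/shuffles_nil -> | ]; first by rewrite big_seq1.
rewrite -has_predC => /hasP [w wws /= wne]; rewrite big_seq big1 // => x /size_shuffles.
case: x => [|//] /esym sx0; move: wne; rewrite -size_eq0 -lt0n => wpos.
suff : (0 < sumn (map size ws))%N by rewrite sx0.
by rewrite (perm_sumn (perm_map size (perm_to_rem wws))) /= (leq_trans wpos) ?leq_addr.
Qed.

Lemma sum_shuffles_mu_red (ws : seq (word d)) :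
  \sum_(x <- shuffles ws) mu_red x = if all (pred1 [::]) ws then 0 else shuffle_moment ws.
Proof.
rewrite big_split /= sumrN sum_shuffles_tone.
case: ifP => [/shuffles_nil -> | _]; last by rewrite subr0.
by rewrite big_seq1 mu_nil subrr.
Qed.

Section CountedStep.
Variables (n : nat) (s c : 'I_k -> nat).
Hypothesis sc_size : forall j, (s j + c j <= size (tau j))%N.
Local Notation cut_words := [seq take (c j) (drop (s j) (tau j)) | j <- enum 'I_k].

Lemma cut_word_nil j : (take (c j) (drop (s j) (tau j)) == [::]) = (c j == 0%N).
Proof.
rewrite -size_eq0 size_takel // size_drop leq_subRL //.
exact: leq_trans (leq_addr _ _) (sc_size j).
Qed.

Section AdmissibleCount.
Variable g : {ffun P -> 'I_n.+2}.
Hypothesis gc : admissible_count s c g.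

Lemma admissible_count_neq0 : exists j, (0 < c j)%N.
Proof.
have [x gx1] := admissible_block_neq0 (andP gc).1 ord0.
have := admissible_count_le1 sc_size gc x; have := admissible_eq0 (andP gc).1 x.
rewrite gx1 => /esym/negbT sx xsc; rewrite -leqNgt in sx.
by exists (tag x); rewrite -(ltn_add2l (s (tag x))) addn0 (leq_ltn_trans sx).
Qed.

Lemma blockword_block1 j : blockword (block g 1) j = take (c j) (drop (s j) (tau j)).
Proof.
rewrite (@blockword_itv _ _ _ _ _ (s j) (s j + c j)) ?addKn ?leq_addr ?sc_size // => q.
have := admissible_count_le1 sc_size gc (pos q); have := admissible_eq0 (andP gc).1 (pos q).
rewrite /inB inE /= [(s j <= _)%N]leqNgt.
by case: (nat_of_ord (g (pos q))) => [|[|v]] //= <- <-.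
Qed.

Lemma block_weight_split_block1 : block_weight g =
  shuffle_moment cut_words * \prod_(i < n) block_moment (block g i.+2).
Proof.
rewrite /block_weight big_ord_recl /block_moment; congr (shuffle_moment _ * _).
by apply: eq_map => j; rewrite blockword_block1.
Qed.
End AdmissibleCount.

Lemma sum_admissible_count :
  \sum_(g : {ffun P -> 'I_n.+2} | admissible s g)
     (if all (fun j => c j == block1_count s g j) (enum 'I_k) then block_weight g else 0) =
  (\sum_(x <- shuffles cut_words) mu_red x) *
  \sum_(g : {ffun P -> 'I_n.+1} | admissible (fun j => s j + c j)%N g) block_weight g.
Proof.
rewrite -big_mkcondr sum_shuffles_mu_red; case: ifP => [/allP cut_nil | /negbT].
  rewrite mul0r big_pred0 // => g; apply/negP => /admissible_count_neq0 [j].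
  have /= := cut_nil _ (map_f _ (mem_enum _ j)).
  by rewrite cut_word_nil lt0n => ->.
rewrite -has_predC => /hasP [_ /mapP [j _ ->]] /=; rewrite cut_word_nil -lt0n => cj.
rewrite (eq_bigr _ block_weight_split_block1) -big_distrr /=; congr (_ * _).
exact: (reindex_split_block0 n sc_size (ex_intro _ j cj) block_moment).
Qed.
End CountedStep.

Lemma all_drop_nil s : all (pred1 [::]) [seq drop (s j) (tau j) | j <- enum 'I_k] =
  [forall x : P, (tagged x < s (tag x))%N].
Proof.
rewrite all_map; apply/allP/forallP => /= [drop_nil x | before j _].
  have := drop_nil (tag x) (mem_enum _ _); rewrite /= -size_eq0 size_drop subn_eq0.
  exact: leq_trans (ltn_ord (tagged x)).
rewrite /= -size_eq0 size_drop subn_eq0 leqNgt; apply/negP => sj.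
by have := before (pos (Ordinal sj)); rewrite /= ltnn.
Qed.

Lemma sum_shuffles_tpow_red n s : (forall j, s j <= size (tau j))%N ->
  \sum_(x <- shuffles [seq drop (s j) (tau j) | j <- enum 'I_k]) tpow mu_red n x =
  \sum_(g : {ffun P -> 'I_n.+1} | admissible s g) block_weight g.
Proof.
elim: n s => [|n IH] s s_size.
  rewrite sum_shuffles_tone all_drop_nil; under eq_bigl => g do rewrite admissible_ord1.
  case: [forall x : P, _]; last by rewrite big_pred0.
  rewrite (eq_bigr (fun _ => 1)) => [|g _]; last by rewrite /block_weight big_ord0.
  by rewrite sumr_const card_ffun !card_ord exp1n.
rewrite [LHS](sum_shuffles_deconcat _ (fun p q => mu_red p * tpow mu_red n q)) ?enum_uniq //.
transitivity (cut_sum (enum 'I_k) (fun j => size (drop (s j) (tau j))) (fun c =>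
    \sum_(g : {ffun P -> 'I_n.+2} | admissible s g)
      (if all (fun j => c j == block1_count s g j) (enum 'I_k) then block_weight g else 0))).
  apply: eq_cut_sum => c c_size.
  have sc_size j : (s j + c j <= size (tau j))%N by rewrite -leq_subRL // -size_drop.
  rewrite sum_admissible_count // -IH // big_distrl; apply: eq_bigr => x1 _.
  rewrite big_distrr; apply: congr_big => //; congr shuffles.
  by apply: eq_map => j; rewrite drop_drop addnC.
rewrite cut_sum_sum; apply: eq_bigr => g gadm; rewrite cut_sum_delta ?enum_uniq // => j _.
by rewrite size_drop leq_sub2r // (leq_trans (max_card _)) ?card_ord.
Qed.
End ShuffleMoments.

Section ExpectedSignature.
Local Open Scope classical_set_scope.
Variables (R : realType) (dO : measure_display) (Omega : measurableType dO)
  (Pr : probability Omega R) (d : nat) (T : R) (X : Omega -> R -> R -> tseries R d).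
Hypothesis X_nil : forall om, X om 0 T [::] = 1.
Hypothesis X_shuffle : forall om f g,
  pairing (X om 0 T) (shp f g) = pairing (X om 0 T) f * pairing (X om 0 T) g.
Hypothesis X_int : forall sigma : word d, Pr.-integrable setT (fun om => (X om 0 T sigma)%:E).
Local Notation mu := (muX Pr T X).

Lemma muX_nil : mu [::] = 1.
Proof. by rewrite /muX (eq_Rintegral _ (fun om _ => X_nil om)) Rintegral_one. Qed.

Lemma shuffle_moment_muX ws :
  shuffle_moment mu ws = Rintegral Pr setT (fun om => \prod_(w <- ws) X om 0 T w).
Proof.
rewrite /shuffle_moment /muX -Rintegral_sum //.
by apply: eq_Rintegral => om _; rewrite sum_shuffles_character.
Qed.

Variables (k : nat) (tau : 'I_k -> seq 'I_d).
Local Notation P := (Ptau tau).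
Local Notation le := (@le_tau d k tau).

Lemma blockword_nil (B : {set P}) j :
  ~~ [exists q : 'I_(size (tau j)), inB B q] -> blockword B j = [::].
Proof.
rewrite negb_exists => /forallP Bj; rewrite /blockword.
by rewrite (eq_filter (a2 := pred0)) ?filter_pred0 // => q; exact/negbTE/Bj.
Qed.

Lemma gen_moment_kerf n (g : {ffun P -> 'I_n.+1}) : admissible (fun _ => 0%N) g ->
  gen_moment Pr T X (kerf (fun x => nat_of_ord (g x))) = block_weight mu g.
Proof.
move=> gadm; rewrite /gen_moment (kerf_admissible0 gadm) big_imset /=; last first.
  by move=> i j _ _; apply: block_admissible0_inj.
apply: eq_bigr => i _; rewrite /block_moment shuffle_moment_muX.
apply: eq_Rintegral => om _; rewrite big_map big_enum /= big_mkcond /=.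
by apply: eq_bigr => j _; case: ifP => // /negbT /blockword_nil ->; rewrite X_nil.
Qed.

Lemma afact_mul_sum (a : {set {set P}}) n (G : R) : #|a| = n ->
  (afact le a)%:R * G =
  \sum_(g : {ffun P -> 'I_n.+1} | [forall x, (0 < g x)%N] &&
        order_pres le (fun x => nat_of_ord (g x)) &&
        (kerf (fun x => nat_of_ord (g x)) == a)) G.
Proof. by move=> <-; rewrite sumr_const mulr_natl /afact cardsE. Qed.

Lemma sum_orp_card n :
  \sum_(a : {set {set P}} | `[< isOrp le a >] && (#|a| == n))
     ((-1) ^+ (#|a|.-1) * ((afact le a)%:R / (#|a|)%:R) * gen_moment Pr T X a) =
  ((-1) ^+ n.-1 / n%:R) * \sum_(g : {ffun P -> 'I_n.+1} | admissible (fun _ => 0%N) g)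
                             block_weight mu g.
Proof.
pose Q (g : {ffun P -> 'I_n.+1}) :=
  [forall x, (0 < g x)%N] && order_pres le (fun x => nat_of_ord (g x)).
rewrite (eq_bigr (fun a => ((-1) ^+ n.-1 / n%:R) *
   \sum_(g | Q g && (kerf (fun x => nat_of_ord (g x)) == a)) gen_moment Pr T X a)); last first.
  by move=> a /andP[_ /eqP an]; rewrite -(afact_mul_sum _ an) an; ring.
rewrite -big_distrr /=; congr (_ * _).
rewrite (exchange_big_dep Q) /=; last by move=> a g _ /andP[].
under [RHS]eq_bigl => g do rewrite admissible0E andbA.
rewrite [RHS]big_mkcondr /=; apply: eq_bigr => g Qg.
have orp_g : `[< isOrp le (kerf (fun x => nat_of_ord (g x))) >].
  by apply/asboolP; exists (fun x => nat_of_ord (g x)); case/andP: Qg.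
set K := kerf _; rewrite (eq_bigl (fun a => (a == K) && (#|K| == n))) => [|a]; last first.
  by case: (eqVneq a K) => [->|_]; rewrite ?orp_g ?Qg ?andbT ?andbF.
case: ifP => Kn; last by rewrite big_pred0 // => a; rewrite andbF.
rewrite (eq_bigl (pred1 K)) => [|a]; last by rewrite andbT.
by rewrite big_pred1_eq gen_moment_kerf // admissible0E andbA Kn andbT.
Qed.
End ExpectedSignature.

(* The added [n = 0] term vanishes because [0^-1 = 0]. *)
Lemma sum_shuffles_tlog (R : realType) d (mu : tseries R d) (ws : seq (word d)) :
  \sum_(x <- shuffles ws) tlog mu x =
  \sum_(n < (sumn (map size ws)).+1)
     ((-1) ^+ n.-1 / n%:R) * \sum_(x <- shuffles ws) tpow (mu_red mu) n x.
Proof.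
rewrite big_seq; under eq_bigr => x /size_shuffles xN do rewrite /tlog xN.
rewrite -big_seq exchange_big /= big_add1 /= big_mkord [RHS]big_ord_recl /=.
by rewrite invr0 mulr0 mul0r add0r; apply: eq_bigr => n _; rewrite big_distrr.
Qed.

Lemma sum_orp_by_card (R : realType) (P : finType) (le : rel P) (F : {set {set P}} -> R) :
  \sum_(a | `[< isOrp le a >]) F a =
  \sum_(n < #|P|.+1) \sum_(a | `[< isOrp le a >] && (#|a| == n)) F a.
Proof.
have orp_card a : `[< isOrp le a >] -> (#|a| < #|P|.+1)%N.
  by move=> /asboolP [f [_ <-]]; rewrite ltnS (leq_trans (leq_imset_card _ _)) ?max_card.
rewrite (partition_big (fun a : {set {set P}} => inord #|a| : 'I_#|P|.+1) predT) //.
apply: eq_bigr => n _.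
apply: eq_bigl => a; case: (boolP `[< _ >]) => //= /orp_card an.
by rewrite -val_eqE /= inordK.
Qed.

Lemma card_Ptau d k (tau : 'I_k -> seq 'I_d) :
  #|{: Ptau tau}| = sumn (map size [seq tau j | j <- enum 'I_k]).
Proof. by rewrite card_tagged -map_comp; congr sumn; apply: eq_map => j; rewrite card_ord. Qed.

Theorem proposition3p3 (R : realType) (dO : measure_display)
  (Omega : measurableType dO) (Pr : probability Omega R)
  (d : nat) (p T : R) (X : Omega -> R -> R -> tseries R d) :
  1 <= p -> 0 < T ->
  (forall om, wgrp p T (X om)) ->
  (forall sigma : word d, Pr.-integrable setT (fun om => (X om 0 T sigma)%:E)) ->
  forall (k : nat) (tau : 'I_k -> seq 'I_d),
    (1 <= k)%N -> (forall j, tau j != [::]) ->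
    pairing (kappaX Pr T X)
      (foldr (@shp R d) (ebasis R [::]) [seq ebasis R (tau j) | j <- enum 'I_k])
    = \sum_(a : {set {set Ptau tau}} | `[< isOrp (@le_tau d k tau) a >])
        ((-1) ^+ (#|a|.-1) * ((afact (@le_tau d k tau) a)%:R / (#|a|)%:R)
         * gen_moment Pr T X a).
Proof.
move=> _ T_gt0 X_wgrp X_int k tau _ _.
have X_nil om := (wgrp_character (ltW T_gt0) (X_wgrp om)).1.
have X_shuffle om := (wgrp_character (ltW T_gt0) (X_wgrp om)).2.
rewrite pairing_shp_ebasis sum_shuffles_tlog sum_orp_by_card -card_Ptau.
apply: eq_bigr => n _; rewrite sum_orp_card //; congr (_ * _).
rewrite -(@sum_shuffles_tpow_red _ _ _ tau _ (muX_nil Pr X_nil) n (fun _ => 0%N)) //.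
by congr (\sum_(x <- shuffles _) _); apply: eq_map => j; rewrite drop0.
Qed.
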